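(* Let $m$ be an even positive integer with prime factorization $m=\prod_{i=1}^{k}p_i^{b_i}$, and let $l(m)=\prod_{i=1}^{k}p_i^{\lfloor \log_{p_i} m\rfloor + b_i}$. Then for every integer $k'$, $$\binom{m+k'}{m}\equiv \binom{l(m)-1-k'}{m}\pmod{m}.$$
   Context: For any integer $a$ (possibly negative) and positive integer $m$, the binomial symbol is defined by $\binom{a}{m}=\frac{\prod_{i=0}^{m-1}(a-i)}{m!}$, which is an integer. $\lfloor x\rfloor$ denotes the greatest integer not exceeding $x$. *)

From HB Require Import structures.
From mathcomp Require Import all_boot all_order all_algebra.
Import Order.TTheory GRing.Theory Num.Theory.
Local Open Scope ring_scope.

Definition intbinom (a : int) (m : nat) : int :=
  ((\prod_(i < m) (a - (i : nat)%:Z)) %/ (m`!)%:Z)%Z.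

Definition lfun (m : nat) : nat :=
  (\prod_(p <- primes m) p ^ (trunc_log p m + logn p m))%N.

From HB Require Import structures.
From mathcomp Require Import all_boot all_order all_algebra zify ring.
Import Order.TTheory GRing.Theory Num.Theory.

(* For 0 < j <= m, every prime p | m satisfies v_p(j) <= floor(log_p m), so
   m * gcd(j, l(m)) divides l(m); since j * C(l, j) = l * C(l - 1, j - 1), this
   forces m | C(l(m), j).  Vandermonde's identity then makes m -> C(N, m) mod m
   periodic of period l(m) on the naturals.  The integer falling factorial
   prod_(i<m) (a - i) changes by a multiple of T when a is shifted by T, so
   shifting by multiples of m * m! moves binom(a, m) to a natural argument
   without changing it mod m, extending the periodicity to all integers.
   Finally, for even m, binom(-1 - k, m) = binom(m + k, m). *)

Lemma logn_prod_primes (s : seq nat) (f : nat -> nat) p :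
  uniq s -> all prime s ->
  logn p (\prod_(q <- s) q ^ f q) = if p \in s then f p else 0.
Proof.
elim: s => [|q s IH] /=; first by rewrite big_nil logn1.
case/andP=> qs us /andP[pq ps].
rewrite big_cons lognM; last 2 first.
- by rewrite expn_gt0 prime_gt0.
- rewrite big_seq; apply: (big_ind (fun x => 0 < x)) => // [x y ? ?|i i_s].
  + by rewrite muln_gt0; apply/andP.
  + by rewrite expn_gt0 prime_gt0 //; apply: (allP ps).
rewrite lognX logn_prime // IH // in_cons.
case: eqVneq => [->|_]; last by rewrite muln0.
by rewrite (negbTE qs) muln1 addn0.
Qed.

Lemma lfun_gt0 m : 0 < lfun m.
Proof.
rewrite /lfun big_seq; apply: (big_ind (fun x => 0 < x)) => // [x y ? ?|i].
  by rewrite muln_gt0; apply/andP.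
by rewrite mem_primes => /andP[pi _]; rewrite expn_gt0 prime_gt0.
Qed.

Lemma logn_lfun m p :
  logn p (lfun m) = if p \in primes m then trunc_log p m + logn p m else 0.
Proof.
rewrite /lfun logn_prod_primes ?primes_uniq //.
by apply/allP => q; rewrite mem_primes => /andP[].
Qed.

Lemma dvdn_mul_gcdn_lfun m j :
  0 < m -> 0 < j -> j <= m -> m * gcdn j (lfun m) %| lfun m.
Proof.
move=> m_gt0 j_gt0 le_jm; set L := lfun m; set g := gcdn j L.
have L_gt0 : 0 < L := lfun_gt0 m.
have g_dvd_L : g %| L := dvdn_gcdr j L.
apply/dvdn_partP; first by rewrite muln_gt0 m_gt0 gcdn_gt0 j_gt0.
move=> p; rewrite mem_primes => /and3P[p_pr _ p_dvd_mg].
have p_primes_m : p \in primes m.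
  rewrite mem_primes p_pr m_gt0 /=.
  move: p_dvd_mg; rewrite Euclid_dvdM // => /orP[//|p_dvd_g].
  have : p \in primes L by rewrite mem_primes p_pr L_gt0 (dvdn_trans p_dvd_g).
  rewrite -logn_gt0 /L logn_lfun.
  by case: ifP => //; rewrite mem_primes => /and3P[].
rewrite p_part pfactor_dvdn // /L logn_lfun p_primes_m lognM ?gcdn_gt0 ?j_gt0 //.
rewrite addnC leq_add2r.
apply: leq_trans (dvdn_leq_log _ j_gt0 (dvdn_gcdl j L)) _.
apply: trunc_log_max; first exact: prime_gt1.
by apply: leq_trans le_jm; apply: dvdn_leq => //; apply: pfactor_dvdnn.
Qed.

Lemma dvdn_bin_of_mul_gcdn m n j :
  0 < j -> m * gcdn j n %| n -> m %| 'C(n, j).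
Proof.
case: j => // j _ mg_dvd_n.
have n_dvd_gC : n %| gcdn j.+1 n * 'C(n, j.+1).
  by rewrite muln_gcdl dvdn_gcd -mul_bin_diag dvdn_mulr ?dvdn_mulr.
rewrite -(@dvdn_pmul2l (gcdn j.+1 n)) ?gcdn_gt0 // mulnC.
exact: dvdn_trans n_dvd_gC.
Qed.

Lemma dvdn_bin_lfun m j : 0 < m -> 0 < j -> j <= m -> m %| 'C(lfun m, j).
Proof.
by move=> m_gt0 j_gt0 le_jm; apply/dvdn_bin_of_mul_gcdn/dvdn_mul_gcdn_lfun.
Qed.

Lemma bin_addn_period m L N :
  (forall j, 0 < j <= m -> m %| 'C(L, j)) -> 'C(N + L, m) = 'C(N, m) %[mod m].
Proof.
move=> m_dvd_binL; rewrite addnC -binomial.Vandermonde big_ord_recl /= bin0 mul1n subn0.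
rewrite -[in RHS](addn0 'C(N, m)); apply/eqP; rewrite eqn_modDl mod0n.
by apply: dvdn_sum => i _; rewrite dvdn_mulr // m_dvd_binL // ltn_ord.
Qed.

Local Open Scope ring_scope.

Definition ffactz (a : int) (m : nat) : int := \prod_(i < m) (a - (i : nat)%:Z).

Lemma intbinomE a m : intbinom a m = (ffactz a m %/ (m`!)%:Z)%Z.
Proof. by []. Qed.

Lemma ffactz_nat (N m : nat) : ffactz N%:Z m = (N ^_ m)%:Z.
Proof.
have [le_mN | lt_Nm] := leqP m N.
  rewrite ffact_prod /ffactz; elim/big_rec2: _ => // i x y _ ->.
  by rewrite PoszM subzn // (leq_trans _ le_mN) // ltnW.
by rewrite ffact_small // /ffactz (bigD1 (Ordinal lt_Nm)) //= subrr mul0r.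
Qed.

Lemma intbinom_nat (N m : nat) : intbinom N%:Z m = 'C(N, m)%:Z.
Proof.
by rewrite intbinomE ffactz_nat -bin_ffact PoszM mulzK // eqz_nat -lt0n fact_gt0.
Qed.

Lemma dvdz_prodB (I : Type) (r : seq I) (P : pred I) (F G : I -> int) (T : int) :
  (forall i, P i -> (T %| F i - G i)%Z) ->
  (T %| \prod_(i <- r | P i) F i - \prod_(i <- r | P i) G i)%Z.
Proof.
move=> T_dvd_FG; apply: (big_rec2 (fun x y => (T %| x - y)%Z)).
  by rewrite subrr.
move=> i x y Pi T_dvd_xy.
have -> : F i * x - G i * y = (F i - G i) * x + G i * (x - y) by ring.
by apply: rpredD; [apply/dvdz_mulr/T_dvd_FG | apply: dvdz_mull].
Qed.

Lemma dvdz_ffactz_shift a T m : (T %| ffactz (a + T) m - ffactz a m)%Z.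
Proof.
apply: dvdz_prodB => i _.
by have -> : a + T - (i : nat)%:Z - (a - (i : nat)%:Z) = T by ring.
Qed.

Lemma dvdz_fact_ffactz a m : ((m`!)%:Z %| ffactz a m)%Z.
Proof.
pose T := ((absz a) * m`!)%N%:Z.
have a_T_ge0 : 0 <= a + T.
  by rewrite /T PoszM; have := fact_gt0 m; rewrite -ltz_nat; nia.
have fact_dvd_T : ((m`!)%:Z %| T)%Z by rewrite dvdzE /= dvdn_mull.
have fact_dvd_shift : ((m`!)%:Z %| ffactz (a + T) m)%Z.
  by rewrite -(gez0_abs a_T_ge0) ffactz_nat -bin_ffact dvdzE /= dvdn_mull.
have -> : ffactz a m = ffactz (a + T) m - (ffactz (a + T) m - ffactz a m) by ring.
by rewrite rpredB // (dvdz_trans fact_dvd_T) ?dvdz_ffactz_shift.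
Qed.

Lemma intbinom_shift a T m :
  ((m * m`!)%N%:Z %| T)%Z -> (intbinom (a + T) m = intbinom a m %[mod m%:Z])%Z.
Proof.
move=> mfact_dvd_T; apply/eqP; rewrite eqz_mod_dvd.
have fact_neq0 : (m`!)%:Z != 0 by rewrite eqz_nat -lt0n fact_gt0.
rewrite -(@dvdz_mul2r (m`!)%:Z _ _ fact_neq0) mulrBl !intbinomE !divzK ?dvdz_fact_ffactz //.
by rewrite -PoszM (dvdz_trans mfact_dvd_T) ?dvdz_ffactz_shift.
Qed.

Lemma intbinom_period m L a : (0 < m)%N ->
  (forall j, (0 < j <= m)%N -> (m %| 'C(L, j))%N) ->
  (intbinom (a + L%:Z) m = intbinom a m %[mod m%:Z])%Z.
Proof.
move=> m_gt0 m_dvd_binL; pose K := ((absz a) * (m * m`!))%N%:Z.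
have K_dvd : ((m * m`!)%N%:Z %| K)%Z by rewrite dvdzE /= dvdn_mull.
have a_K_ge0 : 0 <= a + K.
  have : (0 < m * m`!)%N by rewrite muln_gt0 m_gt0 fact_gt0.
  rewrite /K PoszM -ltz_nat; nia.
set N := absz (a + K).
rewrite -(intbinom_shift (a + L%:Z) _ _ K_dvd) -[in RHS](intbinom_shift a _ _ K_dvd).
rewrite addrAC -(gez0_abs a_K_ge0) -/N -PoszD !intbinom_nat !modz_nat.
by rewrite bin_addn_period.
Qed.

Lemma ffactz_reflect k m : ffactz (-1 - k) m = (-1) ^+ m * ffactz (m%:Z + k) m.
Proof.
rewrite /ffactz [in RHS](reindex_inj rev_ord_inj) /=.
rewrite -[X in (-1) ^+ X](card_ord m) -prodrN.
apply: eq_bigr => i _; rewrite -subzn ?ltn_ord // -addn1 PoszD.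
by ring.
Qed.

Lemma intbinom_reflect k m : ~~ odd m -> intbinom (-1 - k) m = intbinom (m%:Z + k) m.
Proof.
move=> m_even; rewrite !intbinomE ffactz_reflect.
by rewrite -signr_odd (negbTE m_even) expr0 mul1r.
Qed.

Theorem lemma2p2 (m : nat) (k' : int) :
  (0 < m)%N -> ~~ odd m ->
  (intbinom (m%:Z + k') m = intbinom ((lfun m)%:Z - 1 - k') m %[mod m%:Z])%Z.
Proof.
move=> m_gt0 m_even; rewrite -intbinom_reflect //.
have -> : (lfun m)%:Z - 1 - k' = -1 - k' + (lfun m)%:Z by ring.
rewrite intbinom_period // => j /andP[j_gt0 le_jm].
exact: dvdn_bin_lfun.
Qed.
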